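(* Let $(B,\lfloor\cdot,\cdot\rfloor,\|\cdot\|)$ be an SSDB space with quadratic form $q$ and let $g_0(b)=\frac12\|b\|^2$. Then $\{x\in B: g_0(x)=q(x)\}+\{x\in B: g_0(x)=-q(x)\}=B.$
   Context: An SSD space is a pair $(B,\lfloor\cdot,\cdot\rfloor)$ with $B$ a nonzero real vector space and $\lfloor\cdot,\cdot\rfloor$ a symmetric bilinear form; $q(b)=\frac12\lfloor b,b\rfloor$. An SSDB space is a triple $(B,\lfloor\cdot,\cdot\rfloor,\|\cdot\|)$ such that $(B,\lfloor\cdot,\cdot\rfloor)$ is an SSD space, $(B,\|\cdot\|)$ is a Banach space, and the map $i:B\to B^*$, $i(b)=\lfloor\cdot,b\rfloor$, is a surjective isometry onto the dual $B^*$. *)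

From HB Require Import structures.
From mathcomp Require Import all_boot all_order all_algebra.
From mathcomp Require Import all_classical all_reals all_analysis.
Set Implicit Arguments. Unset Strict Implicit. Unset Printing Implicit Defensive.
Import Order.TTheory GRing.Theory Num.Theory.
Import numFieldNormedType.Exports.
Local Open Scope ring_scope.
Local Open Scope classical_set_scope.

Definition is_SSD (R : realType) (B : completeNormedModType R)
  (bf : B -> B -> R) : Prop :=
  (forall a b, bf a b = bf b a) /\
  (forall a1 a2 b, bf (a1 + a2) b = bf a1 b + bf a2 b) /\
  (forall (r : R) a b, bf (r *: a) b = r * bf a b).

Definition dual_norm (R : realType) (B : completeNormedModType R)
  (f : B -> R) : R :=
  sup [set r : R | exists x : B, `|x| <= 1 /\ r = `|f x|].

Definition is_linear_functional (R : realType) (B : completeNormedModType R)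
  (f : B -> R) : Prop :=
  (forall x y, f (x + y) = f x + f y) /\ (forall (r : R) x, f (r *: x) = r * f x).

(* SSDB space: B nonzero, bf an SSD form, and i : b |-> bf(.,b) is a
   surjective isometry from B onto its (topological) dual B^*. *)
Definition is_SSDB (R : realType) (B : completeNormedModType R)
  (bf : B -> B -> R) : Prop :=
  (exists b : B, b != 0) /\
  is_SSD bf /\
  (forall b : B, continuous (fun x => bf x b)) /\
  (forall b : B, dual_norm (fun x => bf x b) = `|b|) /\
  (forall f : B -> R, is_linear_functional f -> continuous f ->
     exists b : B, forall x, f x = bf x b).

Definition qform (R : realType) (B : completeNormedModType R)
  (bf : B -> B -> R) (b : B) : R := bf b b / 2.

Definition g0 (R : realType) (B : completeNormedModType R) (b : B) : R :=
  `|b| ^+ 2 / 2.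

From HB Require Import structures.
From mathcomp Require Import all_boot all_order all_algebra.
From mathcomp Require Import all_classical all_reals all_analysis.
From mathcomp Require Import ring lra.
Set Implicit Arguments. Unset Strict Implicit. Unset Printing Implicit Defensive.
Import Order.TTheory GRing.Theory Num.Theory.
Import numFieldNormedType.Exports.
Local Open Scope ring_scope.
Local Open Scope classical_set_scope.

(* Put Phi a := (g0 a - q a) + (g0 (b - a) + q (b - a)).  Both summands are
   nonnegative since |[a, a]| <= ||a||^2, so it suffices to find w with
   Phi w <= 0; then x := w and y := b - w work.  The function
   F (x, y) := g0 x + g0 (b - y) + q b - [b, y] on B x B is convex and
   coincides with Phi on the diagonal, where it is therefore nonnegative.
   The Hahn-Banach sandwich theorem gives a linear l with l x - l y <= F (x, y);
   the case y = 0 bounds l, so l is continuous and, i being onto B^*, equals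
   [., w] for some w.  Evaluating the inequality at x, y chosen from vectors
   that nearly norm w and b - w yields Phi w <= 0. *)

Section ConvexHahnBanach.
Variables (R : realType) (V : lmodType R) (F : V -> R).
Hypothesis F_convex : forall (l : R) x y, 0 <= l -> l <= 1 ->
  F (l *: x + (1 - l) *: y) <= l * F x + (1 - l) * F y.
Variables (M : set V) (l0 : V -> R).
Hypothesis M0 : M 0.
Hypothesis MD : forall x y, M x -> M y -> M (x + y).
Hypothesis MZ : forall (c : R) x, M x -> M (c *: x).
Hypothesis l0D : forall x y, M x -> M y -> l0 (x + y) = l0 x + l0 y.
Hypothesis l0Z : forall (c : R) x, M x -> l0 (c *: x) = c * l0 x.
Hypothesis l0_le_F : forall x, M x -> l0 x <= F x.

Definition dominated_graph (G : set (V * R)) :=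
  [/\ (forall x r s, G (x, r) -> G (x, s) -> r = s),
      (forall x y r s, G (x, r) -> G (y, s) -> G (x + y, r + s)),
      (forall (c : R) x r, G (x, r) -> G (c *: x, c * r)),
      (forall x r, G (x, r) -> r <= F x) &
      (forall x, M x -> G (x, l0 x))].

(* The empty graph is allowed so that the union of the empty chain qualifies. *)
Lemma dominated_graph_chain (Fam : set (set (V * R))) :
  Fam `<=` (fun G => G = set0 \/ dominated_graph G) -> total_on Fam subset ->
  let U := \bigcup_(G in Fam) G in U = set0 \/ dominated_graph U.
Proof.
move=> FamP Famtot U.
have [[G0 FG0 G0_dom]|Fam0] := pselect (exists2 G, Fam G & dominated_graph G);
    last first.
  left; apply/seteqP; split=> // p [G FG Gp].
  case: (FamP G FG) => [G_empty|GP]; first by rewrite G_empty in Gp.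
  by apply: Fam0; exists G.
have Fam_dom G p : Fam G -> G p -> dominated_graph G.
  by move=> FG Gp; case: (FamP G FG) => // G_empty; rewrite G_empty in Gp.
have common p q : U p -> U q ->
    exists G, [/\ Fam G, dominated_graph G, G p & G q].
  move=> [G1 F1 p1] [G2 F2 q2]; have [s12|s21] := Famtot _ _ F1 F2.
    by exists G2; split=> //; [exact: (Fam_dom _ q) | exact: s12].
  by exists G1; split=> //; [exact: (Fam_dom _ p) | exact: s21].
right; split.
- move=> x r s h1 h2; have [G [_ [Gf _ _ _ _] Gp Gq]] := common _ _ h1 h2.
  exact: Gf Gp Gq.
- move=> x y r s h1 h2; have [G [FG [_ GD _ _ _] Gp Gq]] := common _ _ h1 h2.
  by exists G => //; exact: GD.
- move=> c x r h; have [G [FG [_ _ GZ _ _] Gp _]] := common _ _ h h.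
  by exists G => //; exact: GZ.
- by move=> x r h; have [G [_ [_ _ _ GF _] Gp _]] := common _ _ h h; exact: GF.
- by move=> x Mx; exists G0 => //; case: G0_dom => _ _ _ _; apply.
Qed.

Section OneStepExtension.
Variables (G : set (V * R)) (z : V).
Hypothesis G_dom : dominated_graph G.
Hypothesis z_notin : forall r, ~ G (z, r).

(* Convexity of F separates backward from forward slopes along z. *)
Lemma dominated_graph_slope m r m' r' s t : G (m, r) -> G (m', r') ->
  0 < s -> 0 < t -> (r' - F (m' - s *: z)) / s <= (F (m + t *: z) - r) / t.
Proof.
case: G_dom => _ GD GZ GF _ Gmr Gmr' s0 t0.
have st0 : 0 < s + t by rewrite addr_gt0.
pose l := t / (s + t).
have l_ge0 : 0 <= l by rewrite divr_ge0 // ltW.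
have l_le1 : l <= 1 by rewrite ler_pdivrMr // mul1r lerDr ltW.
have ls : l * s = (1 - l) * t by rewrite /l; field; rewrite lt0r_neq0.
have mix : l *: (m' - s *: z) + (1 - l) *: (m + t *: z) =
           l *: m' + (1 - l) *: m.
  rewrite scalerBr scalerDr !scalerA ls -!addrA; congr (_ + _).
  by rewrite (addrC (_ *: m)) addKr.
have := @F_convex l (m' - s *: z) (m + t *: z) l_ge0 l_le1.
have G_mix := GD _ _ _ _ (GZ l _ _ Gmr') (GZ (1 - l) _ _ Gmr).
rewrite mix => /(le_trans (GF _ _ G_mix)).
have -> : l * r' + (1 - l) * r = (t * r' + s * r) / (s + t).
  by rewrite /l; field; rewrite lt0r_neq0.
have -> : l * F (m' - s *: z) + (1 - l) * F (m + t *: z) =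
    (t * F (m' - s *: z) + s * F (m + t *: z)) / (s + t).
  by rewrite /l; field; rewrite lt0r_neq0.
rewrite ler_pM2r ?invr_gt0 // => h.
by rewrite ler_pdivrMr // mulrAC ler_pdivlMr //; nra.
Qed.

Let slopes := [set v | exists m r s,
  [/\ G (m, r), 0 < s & v = (r - F (m - s *: z)) / s]].

Let slopes_has_sup : has_sup slopes.
Proof.
case: G_dom => _ _ _ _ GM; have G00 : G (0, l0 0) by exact: GM.
split; first by exists ((l0 0 - F (0 - 1 *: z)) / 1), 0, (l0 0), 1.
exists ((F (0 + 1 *: z) - l0 0) / 1) => v [m [r [s [Gmr s0 ->]]]].
exact: dominated_graph_slope.
Qed.

Let c := sup slopes.

Let c_ge_slope m r s : G (m, r) -> 0 < s -> (r - F (m - s *: z)) / s <= c.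
Proof.
by move=> Gmr s0; apply: sup_upper_bound slopes_has_sup _ _; exists m, r, s.
Qed.

Let c_le_slope m r t : G (m, r) -> 0 < t -> c <= (F (m + t *: z) - r) / t.
Proof.
move=> Gmr t0; apply: ge_sup => [|v [m' [r' [s [Gmr' s0 ->]]]]].
  by case: slopes_has_sup.
exact: dominated_graph_slope.
Qed.

Let shift_coef_inj m1 r1 t1 m2 r2 t2 : G (m1, r1) -> G (m2, r2) ->
  m1 + t1 *: z = m2 + t2 *: z -> t1 = t2.
Proof.
case: G_dom => _ GD GZ _ _ G1 G2 e; apply: contrapT => /eqP t12.
apply: (@z_notin ((t1 - t2)^-1 * (r2 + (-1) * r1))).
have -> : z = (t1 - t2)^-1 *: (m2 + (-1) *: m1).
  have -> : m2 + (-1) *: m1 = (t1 - t2) *: z.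
    rewrite scaleN1r -(addrK (t2 *: z) m2) -e scalerBl.
    by rewrite addrAC (addrC m1) addrK.
  by rewrite scalerA mulVf ?scale1r // subr_eq0.
exact/GZ/GD/GZ.
Qed.

Lemma dominated_graph_extend : exists2 G', dominated_graph G' & G `<` G'.
Proof.
case: (G_dom) => Gf GD GZ GF GM.
exists [set p | exists m r t, G (m, r) /\ p = (m + t *: z, r + t * c)].
  split.
  - move=> x r s [m1 [r1 [t1 [G1 [e1 ->]]]]] [m2 [r2 [t2 [G2 [e2 ->]]]]].
    have t12 := shift_coef_inj G1 G2 (etrans (esym e1) e2); subst t2.
    have m12 : m1 = m2 by apply: (addIr (t1 *: z)); rewrite -e1 -e2.
    by subst m2; rewrite (Gf _ _ _ G1 G2).
  - move=> x y r s [m1 [r1 [t1 [G1 [-> ->]]]]] [m2 [r2 [t2 [G2 [-> ->]]]]].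
    exists (m1 + m2), (r1 + r2), (t1 + t2); split; first exact: GD.
    by rewrite scalerDl mulrDl; congr (_, _); rewrite addrACA.
  - move=> d x r [m [r1 [t [G1 [-> ->]]]]].
    exists (d *: m), (d * r1), (d * t); split; first exact: GZ.
    by rewrite scalerDr scalerA mulrDr mulrA.
  - move=> x r [m [r1 [t [G1 [-> ->]]]]].
    have [t_lt0|t_gt0|->] := ltgtP t 0.
    + have nt_gt0 : 0 < - t by rewrite oppr_gt0.
      have := c_ge_slope G1 nt_gt0.
      by rewrite scaleNr opprK ler_pdivrMr // => h; nra.
    + by have := c_le_slope G1 t_gt0; rewrite ler_pdivlMr // => h; nra.
    + by rewrite scale0r mul0r !addr0; exact: GF.
  - move=> x Mx; exists x, (l0 x), 0; split; first exact: GM.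
    by rewrite scale0r mul0r !addr0.
split.
  by move=> [x r] Gxr; exists x, r, 0; rewrite scale0r mul0r !addr0.
move=> /(_ (z, c)) h; apply: (@z_notin c); apply: h.
have G00 : G (0, 0) by have := GZ 0 _ _ (GM _ M0); rewrite scale0r mul0r.
by exists 0, 0, 1; rewrite scale1r mul1r !add0r.
Qed.

End OneStepExtension.

Theorem hahn_banach_convex : exists L : V -> R,
  [/\ forall x y, L (x + y) = L x + L y,
      forall (c : R) x, L (c *: x) = c * L x,
      forall x, L x <= F x &
      forall x, M x -> L x = l0 x].
Proof.
have [A [A_P A_max]] := Zorn_bigcup dominated_graph_chain.
have graph_l0_dom : dominated_graph [set p | M p.1 /\ p.2 = l0 p.1].
  split.
  - by move=> x r s [_ /= ->] [_ /= ->].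
  - move=> x y r s [/= Mx ->] [/= My ->].
    by split; [exact: MD | rewrite /= l0D].
  - by move=> d x r [/= Mx ->]; split; [exact: MZ | rewrite /= l0Z].
  - by move=> x r [/= Mx ->]; exact: l0_le_F.
  - by move=> x Mx.
have A_dom : dominated_graph A.
  case: A_P => // A0; exfalso; apply: (A_max _ _ (or_intror graph_l0_dom)).
  by rewrite A0; split => // /(_ (0, l0 0)); apply.
have A_total z : exists r, A (z, r).
  apply: contrapT => z_notin; have [G' G'_dom AG'] := dominated_graph_extend
    A_dom (fun r Azr => z_notin (ex_intro _ r Azr)).
  exact: A_max AG' (or_intror G'_dom).
case: A_dom => Af AD AZ AF AM; have [L AL] := choice A_total.
exists L; split.
- by move=> x y; apply: Af (AL (x + y)) (AD _ _ _ _ (AL x) (AL y)).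
- by move=> d x; apply: Af (AL (d *: x)) (AZ d _ _ (AL x)).
- by move=> x; apply: AF (AL x).
- by move=> x Mx; apply: Af (AL x) (AM _ Mx).
Qed.

End ConvexHahnBanach.

Lemma sqr_norm_convex (R : realType) (V : normedModType R) (l : R) (x y : V) :
  0 <= l -> l <= 1 ->
  `|l *: x + (1 - l) *: y| ^+ 2 <= l * `|x| ^+ 2 + (1 - l) * `|y| ^+ 2.
Proof.
move=> l_ge0 l_le1.
have tri : `|l *: x + (1 - l) *: y| <= l * `|x| + (1 - l) * `|y|.
  by rewrite (le_trans (ler_normD _ _)) // !normrZ !ger0_norm ?subr_ge0.
have jensen :
    (l * `|x| + (1 - l) * `|y|) ^+ 2 <= l * `|x| ^+ 2 + (1 - l) * `|y| ^+ 2.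
  have : 0 <= l * (1 - l) * (`|x| - `|y|) ^+ 2.
    by rewrite mulr_ge0 ?sqr_ge0 ?mulr_ge0 ?subr_ge0.
  by rewrite !expr2 => h; nra.
apply: le_trans jensen; rewrite ler_sqr ?nnegrE ?normr_ge0 //.
by rewrite addr_ge0 // mulr_ge0 ?subr_ge0.
Qed.

Lemma linear_continuous_of_sqr_bound (R : realType) (V : normedModType R)
    (l : V -> R) (c : R) :
  (forall x y, l (x + y) = l x + l y) ->
  (forall (a : R) x, l (a *: x) = a * l x) ->
  (forall u, l u <= `|u| ^+ 2 / 2 + c) -> continuous l.
Proof.
move=> lD lZ l_le.
have l_lin : linear (l : V -> R^o) by move=> a x y; rewrite lD lZ.
pose L : {linear V -> R^o} :=
  HB.pack l (GRing.isLinear.Build R V R^o *:%R l l_lin).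
have l_bound u : `|l u| <= (1/2 + `|c|) * `|u|.
  have [->|u0] := eqVneq u 0.
    by rewrite normr0 mulr0 normr_le0 -(scale0r 0) lZ mul0r.
  have nu_gt0 : 0 < `|u| by rewrite normr_gt0.
  pose v := `|u|^-1 *: u.
  have nv : `|v| = 1 by rewrite normrZ normfV normr_id mulVf // gt_eqF.
  have lv_bound : `|l v| <= 1/2 + `|c|.
    have := l_le v; have := l_le (- v).
    rewrite normrN nv -scaleN1r lZ expr1n; have := ler_norm c.
    have := ler_norm (- c); rewrite normrN => h1 h2 h3 h4.
    by rewrite ler_norml; apply/andP; split; lra.
  have -> : l u = `|u| * l v by rewrite -lZ /v scalerA mulfV ?gt_eqF ?scale1r.
  by rewrite normrM normr_id mulrC ler_wpM2r.
apply: (@bounded_linear_continuous _ _ _ L); apply/linear_boundedP.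
near=> r => x; rewrite (le_trans (l_bound x)) // ler_wpM2r //.
Unshelve. all: by end_near.
Qed.

Section SSDB.
Variables (R : realType) (B : completeNormedModType R) (bf : B -> B -> R).
Hypothesis bfC : forall a b, bf a b = bf b a.
Hypothesis bfDl : forall a1 a2 b, bf (a1 + a2) b = bf a1 b + bf a2 b.
Hypothesis bfZl : forall (r : R) a b, bf (r *: a) b = r * bf a b.
Hypothesis bf_dual_norm : forall b, dual_norm (fun x => bf x b) = `|b|.

Let bf0l b : bf 0 b = 0.
Proof. by have := bfZl 0 0 b; rewrite scale0r mul0r. Qed.

Let bfNl a b : bf (- a) b = - bf a b.
Proof. by rewrite -scaleN1r bfZl mulN1r. Qed.

Let bfBl a c b : bf (a - c) b = bf a b - bf c b.
Proof. by rewrite bfDl bfNl. Qed.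

Let bfBr a c b : bf b (a - c) = bf b a - bf b c.
Proof. by rewrite bfC bfBl !(bfC b). Qed.

Let dual_norm_has_sup a :
  has_sup [set r : R | exists x : B, `|x| <= 1 /\ r = `|bf x a|].
Proof.
split; first by exists `|bf 0 a|, 0; rewrite normr0.
apply: contrapT => no_ub.
have : dual_norm (fun x => bf x a) = 0.
  by rewrite /dual_norm sup_out // => -[_ ?]; exact: no_ub.
rewrite bf_dual_norm => /normr0_eq0 a0.
by apply: no_ub; exists 0 => r [x [_ ->]]; rewrite a0 bfC bf0l normr0.
Qed.

Lemma normr_bf_le a x : `|bf x a| <= `|x| * `|a|.
Proof.
have [->|x0] := eqVneq x 0; first by rewrite bf0l !normr0 mul0r.
have nx_gt0 : 0 < `|x| by rewrite normr_gt0.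
pose u := `|x|^-1 *: x.
have nu : `|u| = 1 by rewrite normrZ normfV normr_id mulVf // gt_eqF.
have : `|bf u a| <= `|a|.
  rewrite -bf_dual_norm; apply: sup_upper_bound (dual_norm_has_sup a) _ _.
  by exists u; rewrite nu.
rewrite /u bfZl normrM normfV normr_id => h.
by have := ler_wpM2l (ltW nx_gt0) h; rewrite mulrA mulfV ?gt_eqF // mul1r.
Qed.

Lemma bf_norming a e : 0 < e -> exists x : B, `|x| <= 1 /\ `|a| - e < bf x a.
Proof.
move=> e_gt0.
have [v [x [x_le1 ->]] hv] := sup_adherent e_gt0 (dual_norm_has_sup a).
rewrite -/(dual_norm (fun x => bf x a)) bf_dual_norm in hv.
have [bf_ge0|bf_lt0] := leP 0 (bf x a).
  by exists x; rewrite ger0_norm in hv.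
by exists (- x); rewrite normrN bfNl; rewrite ltr0_norm in hv.
Qed.

Lemma normr_qform_le_g0 a : `|qform bf a| <= g0 a.
Proof.
rewrite /qform /g0 normrM [`|_^-1|]ger0_norm ?invr_ge0 // ler_pM2r ?invr_gt0 //.
by rewrite expr2 normr_bf_le.
Qed.

Variable b : B.

Definition sandwich (p : B * B) : R :=
  g0 p.1 + g0 (b - p.2) + qform bf b - bf b p.2.

Lemma sandwich_diag a :
  sandwich (a, a) = (g0 a - qform bf a) + (g0 (b - a) + qform bf (b - a)).
Proof. by rewrite /sandwich /qform /= bfBl !bfBr (bfC a b); lra. Qed.

Lemma sandwich_diag_ge0 a : 0 <= sandwich (a, a).
Proof.
have := normr_qform_le_g0 a; have := normr_qform_le_g0 (b - a).
by rewrite sandwich_diag !ler_norml => /andP[? ?] /andP[? ?]; lra.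
Qed.

Lemma sandwich_convex (l : R) (p q : B * B) : 0 <= l -> l <= 1 ->
  sandwich (l *: p + (1 - l) *: q) <= l * sandwich p + (1 - l) * sandwich q.
Proof.
case: p q => [x1 x2] [y1 y2] l_ge0 l_le1; rewrite /sandwich /g0 /=.
have -> : b - (l *: x2 + (1 - l) *: y2) = l *: (b - x2) + (1 - l) *: (b - y2).
  by rewrite !scalerBr addrACA -opprD -scalerDl subrKC scale1r.
have -> : bf b (l *: x2 + (1 - l) *: y2) = l * bf b x2 + (1 - l) * bf b y2.
  by rewrite bfC bfDl !bfZl (bfC x2) (bfC y2).
have := sqr_norm_convex x1 y1 l_ge0 l_le1.
have := sqr_norm_convex (b - x2) (b - y2) l_ge0 l_le1.
nra.
Qed.

Lemma sandwiched_linear_functional : exists l : B -> R,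
  [/\ forall x y, l (x + y) = l x + l y,
      forall (c : R) x, l (c *: x) = c * l x &
      forall x y, l x - l y <= sandwich (x, y)].
Proof.
pose diag := [set p : B * B | p.1 = p.2].
have [||||||L [LD LZ L_le L_diag]] :=
  @hahn_banach_convex R (B * B)%type sandwich sandwich_convex diag (fun=> 0).
- by [].
- by move=> [x1 x2] [y1 y2]; rewrite /diag /= => -> ->.
- by move=> c [x1 x2]; rewrite /diag /= => ->.
- by move=> *; rewrite addr0.
- by move=> *; rewrite mulr0.
- by move=> [x y]; rewrite /diag /= => ->; exact: sandwich_diag_ge0.
exists (fun u => L (u, 0)); split.
- by move=> x y; rewrite -LD; congr L; congr (_, _); rewrite /= addr0.
- by move=> c x; rewrite -LZ; congr L; congr (_, _); rewrite /= scaler0.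
- have L_shift x y : L (x, y) = L (x - y, 0).
    have -> : (x, y) = (x - y, 0) + (y, y).
      by congr (_, _); rewrite /= ?subrK ?add0r.
    by rewrite LD (L_diag (y, y)) // addr0.
  move=> x y; apply: le_trans (L_le (x, y)); rewrite [leRHS]L_shift.
  have -> : (x, 0) = (x - y, 0) + (y, 0) :> B * B.
    by congr (_, _); rewrite /= ?subrK ?addr0.
  by rewrite LD addrK.
Qed.

Hypothesis bf_onto : forall f : B -> R, is_linear_functional f -> continuous f ->
  exists b : B, forall x, f x = bf x b.

Lemma sandwich_representer : exists w : B,
  forall x y, bf x w - bf y w <= sandwich (x, y).
Proof.
have [l [lD lZ l_le]] := sandwiched_linear_functional.
have l0 : l 0 = 0 by rewrite -(scale0r 0) lZ mul0r.
have l_cont : continuous l.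
  apply: (linear_continuous_of_sqr_bound (c := g0 b + qform bf b)) lD lZ _.
  move=> u.
  have := l_le u 0; rewrite /sandwich /g0 l0 subr0 bfC bf0l /=.
  by rewrite subr0 subr0 addrA.
have [w lw] := bf_onto (conj lD lZ) l_cont.
by exists w => x y; rewrite -!lw.
Qed.

Lemma sandwich_representer_diag_le0 w :
  (forall x y, bf x w - bf y w <= sandwich (x, y)) -> sandwich (w, w) <= 0.
Proof.
move=> w_le; pose S := `|w| + `|b - w|.
have S_ge0 : 0 <= S by rewrite addr_ge0.
have small e : 0 < e -> sandwich (w, w) <= e * S.
  move=> e_gt0.
  have [x1 [x1_le1 x1_norming]] := bf_norming w e_gt0.
  have [x2 [x2_le1 x2_norming]] := bf_norming (b - w) e_gt0.
  have := w_le (`|w| *: x1) (b + `|b - w| *: x2).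
  rewrite /sandwich /g0 /qform /= opprD addrA subrr add0r normrN.
  rewrite !normrZ !normr_id.
  rewrite bfDl !bfZl (bfC b (b + _)) bfDl bfZl (bfC x2 b).
  rewrite bfBr in x2_norming.
  have p1 : `|w| * (`|w| - e) <= `|w| * bf x1 w by rewrite ler_wpM2l // ltW.
  have p2 : `|b - w| * (`|b - w| - e) <= `|b - w| * (bf x2 b - bf x2 w).
    by rewrite ler_wpM2l // ltW.
  have p3 : (`|w| * `|x1|) ^+ 2 <= `|w| ^+ 2.
    by rewrite exprMn ler_piMr ?exprn_ge0 ?exprn_ile1.
  have p4 : (`|b - w| * `|x2|) ^+ 2 <= `|b - w| ^+ 2.
    by rewrite exprMn ler_piMr ?exprn_ge0 ?exprn_ile1.
  by rewrite /S (bfC b x2) (bfC b w) => h; nra.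
apply/ler_addgt0Pr => e e_gt0; rewrite add0r.
have S1_gt0 : 0 < S + 1 by rewrite ltr_pwDr.
apply: (le_trans (small _ (divr_gt0 e_gt0 S1_gt0))).
by rewrite mulrAC ler_pdivrMr // ler_pM2l // lerDl.
Qed.

Lemma ssdb_decomposition : exists x y : B,
  g0 x = qform bf x /\ g0 y = - qform bf y /\ b = x + y.
Proof.
have [w w_le] := sandwich_representer.
have := sandwich_representer_diag_le0 w_le; rewrite sandwich_diag.
have := normr_qform_le_g0 w; have := normr_qform_le_g0 (b - w).
rewrite !ler_norml => /andP[? ?] /andP[? ?] ?.
by exists w, (b - w); split; [lra | split; [lra | rewrite subrKC]].
Qed.

End SSDB.

Theorem mainTheorem15 (R : realType) (B : completeNormedModType R)
  (bf : B -> B -> R) :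
  is_SSDB bf ->
  forall b : B, exists x y : B,
    g0 x = qform bf x /\ g0 y = - qform bf y /\ b = x + y.
Proof.
move=> [_ [[bfC [bfDl bfZl]] [_ [bf_dual_norm bf_onto]]]] b.
exact: ssdb_decomposition bf_onto.
Qed.
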